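(* Let $G$ be a flat affine group scheme over $R$ and $N\to G$ the automatic blowup of the identity. For every morphism $\mathcal G\to G$ of flat affine group schemes over $R$ which induces an isomorphism on generic fibres, there exists a unique morphism $N\to\mathcal G$ whose composition with $\mathcal G\to G$ is $N\to G$. Thus $N\to G$ is an initial object in the category of flat affine group schemes over $G$ inducing isomorphisms on generic fibres.
   Context: $R$ is a discrete valuation ring with uniformizer $\pi$, fraction field $K$, residue field $k$; $R[G]\subset K[G]$ for flat $G$. The Neron blowup of a flat affine group scheme $H$ at a closed subgroup of $H\otimes k$ with ideal $J\subset R[H]$ (inverse image of its ideal) is $\mathrm{Spec}$ of the subring of $K[H]$ generated by $R[H]$ and $\pi^{-1}J$. The automatic blowup of the identity $N\to G$ is the limit of $\cdots\to G_{n+1}\to G_n\to\cdots\to G_0=G$, where $G_{n+1}\to G_n$ is the Neron blowup of $G_n$ at $\{e\}\subset G_n\otimes k$. *)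

(* Encoding of flat affine group schemes over a DVR R
   through their generic fibres: a flat affine group scheme G over R is
   encoded by the commutative K-Hopf algebra A = K[G] together with the
   R-subalgebra B = R[G] of A (flat over a DVR = torsion free, so
   R[G] embeds in K[G] = R[G] (x)_R K). *)
From HB Require Import structures.
From mathcomp Require Import all_boot all_order all_algebra.
Set Implicit Arguments. Unset Strict Implicit. Unset Printing Implicit Defensive.
Import Order.TTheory GRing.Theory Num.Theory.
Local Open Scope ring_scope.

Definition is_dvr (K : fieldType) (R : K -> Prop) (pi : K) : Prop :=
  [/\ [/\ R 0, R 1, (forall x y, R x -> R y -> R (x - y))
         & (forall x y, R x -> R y -> R (x * y))],
      [/\ R pi, pi != 0 & (~ R pi^-1)]
    & forall x : K, x != 0 ->
        exists (n : int) (u : K), [/\ R u, R u^-1 & x = u * pi ^ n]].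

(* An element of A (x)_K A is represented by a formal sum (a list of pairs);
   over a field, two such sums are equal in A (x)_K A iff every K-bilinear
   form A x A -> K takes the same value on them.  Same for A (x) A (x) A. *)
Section Tensor.
Variables (K : fieldType) (A : comAlgType K).

Definition bilin (f : A -> A -> K) : Prop :=
  (forall (a : K) x x' y, f (a *: x + x') y = a * f x y + f x' y) /\
  (forall (a : K) x y y', f x (a *: y + y') = a * f x y + f x y').

Definition teq2 (s t : seq (A * A)) : Prop :=
  forall f, bilin f ->
    \sum_(p <- s) f p.1 p.2 = \sum_(p <- t) f p.1 p.2.

Definition trilin (f : A -> A -> A -> K) : Prop :=
  (forall (a : K) x x' y z, f (a *: x + x') y z = a * f x y z + f x' y z) /\
  (forall (a : K) x y y' z, f x (a *: y + y') z = a * f x y z + f x y' z) /\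
  (forall (a : K) x y z z', f x y (a *: z + z') = a * f x y z + f x y z').

Definition teq3 (s t : seq (A * A * A)) : Prop :=
  forall f, trilin f ->
    \sum_(p <- s) f p.1.1 p.1.2 p.2 = \sum_(p <- t) f p.1.1 p.1.2 p.2.

Definition tmul (s t : seq (A * A)) : seq (A * A) :=
  [seq (p.1 * q.1, p.2 * q.2) | p <- s, q <- t].

Definition is_hopf (D : A -> seq (A * A)) (e : A -> K) (S : A -> A) : Prop :=
  [/\
      [/\ (forall (a : K) x y,
         teq2 (D (a *: x + y)) ([seq (a *: p.1, p.2) | p <- D x] ++ D y)),
      (forall x y, teq2 (D (x * y)) (tmul (D x) (D y)))
      & teq2 (D 1) [:: (1, 1)]],
      (forall x, teq3 [seq (q.1, q.2, p.2) | p <- D x, q <- D p.1]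
                      [seq (p.1, q.1, q.2) | p <- D x, q <- D p.2]),
      [/\ (forall (a : K) x y, e (a *: x + y) = a * e x + e y),
          (forall x y, e (x * y) = e x * e y) & e 1 = 1],
      (forall x, \sum_(p <- D x) e p.1 *: p.2 = x /\
                 \sum_(p <- D x) e p.2 *: p.1 = x)
    &
      (forall (a : K) x y, S (a *: x + y) = a *: S x + S y) /\
      (forall x, \sum_(p <- D x) S p.1 * p.2 = (e x)%:A /\
                 \sum_(p <- D x) p.1 * S p.2 = (e x)%:A)].

End Tensor.

Section Flat.
Variables (K : fieldType) (R : K -> Prop) (pi : K) (A : comAlgType K).

Definition is_Rsubalg (B : A -> Prop) : Prop :=
  [/\ (forall a : K, R a -> B a%:A),
      (forall x y, B x -> B y -> B (x - y))
    & (forall x y, B x -> B y -> B (x * y))].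

(* (A, B) encodes the flat affine group scheme Spec B over R with
   generic fibre Spec A: B is an R-Hopf subalgebra of the K-Hopf algebra A
   and B (x)_R K = A (every element of A is pi^-n times an element of B). *)
Definition flat_group (D : A -> seq (A * A)) (e : A -> K) (S : A -> A)
    (B : A -> Prop) : Prop :=
  [/\ is_hopf D e S, is_Rsubalg B,
      (forall x : A, exists (n : nat) (b : A), B b /\ pi ^+ n *: x = b)
    & [/\
      (forall b, B b -> exists s : seq (A * A),
          (forall p, p \in s -> B p.1 /\ B p.2) /\ teq2 (D b) s),
      (forall b, B b -> R (e b))
    & (forall b, B b -> B (S b))]].

Inductive gen_alg (P : A -> Prop) : A -> Prop :=
  | gen_in x : P x -> gen_alg P x
  | gen_scal (a : K) : R a -> gen_alg P a%:A
  | gen_sub x y : gen_alg P x -> gen_alg P y -> gen_alg P (x - y)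
  | gen_mul x y : gen_alg P x -> gen_alg P y -> gen_alg P (x * y).

(* For H with R[H] = Bn inside K[H] = A and counit e: the ideal J of
   {e} in H (x) k, pulled back to R[H], is {y in Bn | e y in pi R};
   the Neron blowup is Spec of the subring generated by Bn and pi^-1 J. *)
Definition neron_blowup_e (e : A -> K) (Bn : A -> Prop) : A -> Prop :=
  gen_alg (fun x => Bn x \/
             exists y, [/\ Bn y, R (pi^-1 * e y) & x = pi^-1 *: y]).

Fixpoint auto_blowup_step (e : A -> K) (B : A -> Prop) (n : nat) : A -> Prop :=
  match n with
  | 0 => B
  | n'.+1 => neron_blowup_e e (auto_blowup_step e B n')
  end.

(* R[N] = colimit of the R[G_n] = their union inside A  (N = lim G_n) *)
Definition auto_blowup (e : A -> K) (B : A -> Prop) : A -> Prop :=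
  fun x => exists n, auto_blowup_step e B n x.

End Flat.

(* A morphism of flat group schemes Spec B1 -> Spec B2 (generic fibres
   A1, A2) is encoded by its comorphism on generic fibres f : A2 -> A1,
   a K-bialgebra homomorphism mapping B2 into B1 (it is determined by,
   and determines, the R-Hopf algebra map B2 -> B1). *)
Definition group_comor (K : fieldType) (A2 A1 : comAlgType K)
    (B2 : A2 -> Prop) (B1 : A1 -> Prop)
    (D2 : A2 -> seq (A2 * A2)) (e2 : A2 -> K)
    (D1 : A1 -> seq (A1 * A1)) (e1 : A1 -> K) (f : A2 -> A1) : Prop :=
  [/\ [/\ (forall (a : K) x y, f (a *: x + y) = a *: f x + f y),
      (forall x y, f (x * y) = f x * f y) & f 1 = 1],
      (forall x, B2 x -> B1 (f x)),
      (forall x, teq2 [seq (f p.1, f p.2) | p <- D2 x] (D1 (f x)))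
    & (forall x, e1 (f x) = e2 x)].

(* The comorphism of N -> calG must be the inverse g of the generic-fibre
   isomorphism f, which is unique because R[G] spans K[G].  It remains to
   see that g maps R[calG] into R[N].  For b in R[calG], the counit of
   x := g b - e'(b) is zero and pi^n x lies in R[G] for some n; since x
   stays in the augmentation ideal, each of n successive Neron blowups of
   the identity divides it by pi once more, so x lies in R[G_n], while
   the constant e'(b) lies in R. *)
From HB Require Import structures.
From mathcomp Require Import all_boot all_order all_algebra.
Set Implicit Arguments. Unset Strict Implicit. Unset Printing Implicit Defensive.
Import Order.TTheory GRing.Theory Num.Theory.
Local Open Scope ring_scope.

Section LinearFun.
Variables (K : fieldType) (U V : lmodType K) (h : U -> V).
Hypothesis h_lin : forall (a : K) x y, h (a *: x + y) = a *: h x + h y.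

Lemma linear_fun0 : h 0 = 0.
Proof.
have := h_lin 1 0 0; rewrite !scale1r addr0 => h00.
by apply: (@addrI _ (h 0)); rewrite addr0 -h00.
Qed.

Lemma linear_funZ (a : K) x : h (a *: x) = a *: h x.
Proof. by have := h_lin a x 0; rewrite !addr0 linear_fun0 addr0. Qed.

Lemma linear_funB x y : h (x - y) = h x - h y.
Proof. by rewrite -scaleN1r addrC h_lin scaleN1r addrC. Qed.

End LinearFun.

Lemma linear_fun_eq_on_lattice (K : fieldType) (U V : lmodType K) (h h' : U -> V)
    (pi : K) (B : U -> Prop) :
    (forall (a : K) x y, h (a *: x + y) = a *: h x + h y) ->
    (forall (a : K) x y, h' (a *: x + y) = a *: h' x + h' y) -> pi != 0 ->
    (forall x, exists (n : nat) (b : U), B b /\ pi ^+ n *: x = b) ->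
    (forall b, B b -> h b = h' b) -> h =1 h'.
Proof.
move=> h_lin h'_lin pi0 B_spans eq_hB x.
have [n [b [Bb pin_x]]] := B_spans x.
have := eq_hB b Bb; rewrite -pin_x (linear_funZ h_lin) (linear_funZ h'_lin).
exact/scalerI/expf_neq0.
Qed.

Section AutoBlowup.
Variables (K : fieldType) (R : K -> Prop) (pi : K) (A : comAlgType K).
Variables (e : A -> K) (B : A -> Prop).
Hypotheses (R0 : R 0) (R_sub : forall x y, R x -> R y -> R (x - y)).
Hypothesis pi0 : pi != 0.
Hypotheses (e_lin : forall (a : K) x y, e (a *: x + y) = a * e x + e y)
           (e1 : e 1 = 1).
Hypotheses (B_const : forall a : K, R a -> B a%:A)
           (B_spans : forall x : A, exists (n : nat) (b : A), B b /\ pi ^+ n *: x = b).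

Let e_linK : forall (a : K) x y, e (a *: x + y) = a *: (e x : K^o) + e y.
Proof. exact: e_lin. Qed.

Let eZ (a : K) x : e (a *: x) = a * e x := @linear_funZ K A K^o e e_linK a x.

Lemma auto_blowup_step_le k m x : (k <= m)%N ->
  auto_blowup_step R pi e B k x -> auto_blowup_step R pi e B m x.
Proof.
move=> /subnKC <-; move: (m - k)%N => j Bkx.
by elim: j => [|j IHj]; rewrite ?addn0 // addnS; apply: gen_in; left.
Qed.

Lemma auto_blowup_step_divX n : forall k x, e x = 0 ->
  auto_blowup_step R pi e B k (pi ^+ n *: x) ->
  auto_blowup_step R pi e B (k + n) x.
Proof.
elim: n => [|n IHn] k x ex0; first by rewrite scale1r addn0.
move=> Bk_xn; have Bkn_pix : auto_blowup_step R pi e B (k + n) (pi *: x).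
  by apply: IHn; rewrite ?eZ ?ex0 ?mulr0 // scalerA -exprSr.
rewrite addnS; apply: gen_in; right; exists (pi *: x).
by rewrite eZ ex0 !mulr0 scalerA mulVf // scale1r.
Qed.

Lemma auto_blowup_sub x y : auto_blowup R pi e B x -> auto_blowup R pi e B y ->
  auto_blowup R pi e B (x - y).
Proof.
move=> [k Bkx] [m Bmy]; exists (maxn k m).+1; apply: gen_sub; apply: gen_in; left.
  by apply: auto_blowup_step_le Bkx; rewrite leq_maxl.
by apply: auto_blowup_step_le Bmy; rewrite leq_maxr.
Qed.

Lemma mem_auto_blowup x : R (e x) -> auto_blowup R pi e B x.
Proof.
move=> Rex; pose x0 := x - (e x)%:A.
have ex0 : e x0 = 0 by rewrite (@linear_funB K A K^o e e_linK) eZ e1 mulr1 subrr.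
have N_x0 : auto_blowup R pi e B x0.
  have [n [b [Bb pin_x0]]] := B_spans x0.
  by exists (0 + n)%N; apply: auto_blowup_step_divX; rewrite //= pin_x0.
have N_ex : auto_blowup R pi e B (0 - e x)%:A by exists 0%N; apply/B_const/R_sub.
have -> : x = x0 - (0 - e x)%:A by rewrite /x0 sub0r scaleNr opprK subrK.
exact: auto_blowup_sub.
Qed.

End AutoBlowup.

Lemma group_comor_can (K : fieldType) (A2 A1 : comAlgType K)
    (B2 C2 : A2 -> Prop) (B1 C1 : A1 -> Prop)
    (D2 : A2 -> seq (A2 * A2)) (e2 : A2 -> K)
    (D1 : A1 -> seq (A1 * A1)) (e1 : A1 -> K) (f : A2 -> A1) (g : A1 -> A2) :
  group_comor B2 B1 D2 e2 D1 e1 f -> cancel f g -> cancel g f ->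
  (forall y, C1 y -> C2 (g y)) -> group_comor C1 C2 D1 e1 D2 e2 g.
Proof.
move=> [[f_lin f_mul f1] _ f_D f_e] fK gK g_C.
have g_lin (a : K) x y : g (a *: x + y) = a *: g x + g y.
  by apply: (can_inj fK); rewrite f_lin !gK.
split=> //.
- split=> //; last by apply: (can_inj fK); rewrite f1 gK.
  by move=> x y; apply: (can_inj fK); rewrite f_mul !gK.
- move=> y F [F_linl F_linr].
  have F_g_bilin : bilin (fun u v => F (g u) (g v)).
    by split=> a u u' v /=; rewrite g_lin ?F_linl ?F_linr.
  have := f_D (g y) _ F_g_bilin; rewrite gK !big_map /= => <-.
  by apply: eq_bigr => p _; rewrite !fK.
- by move=> y; rewrite -f_e gK.
Qed.

Theorem corollary2p22 (K : fieldType) (R : K -> Prop) (pi : K)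
    (hR : is_dvr R pi)
    (A : comAlgType K) (D : A -> seq (A * A)) (e : A -> K) (S : A -> A)
    (B : A -> Prop) (hG : flat_group R pi D e S B)
    (A' : comAlgType K) (D' : A' -> seq (A' * A')) (e' : A' -> K)
    (S' : A' -> A') (B' : A' -> Prop) (hG' : flat_group R pi D' e' S' B')
    (f : A -> A') (hf : group_comor B B' D e D' e' f) (hiso : bijective f) :
  exists g : A' -> A,
    (group_comor B' (auto_blowup R pi e B) D' e' D e g /\
     (forall x, B x -> g (f x) = x)) /\
    (forall g' : A' -> A,
       group_comor B' (auto_blowup R pi e B) D' e' D e g' /\
       (forall x, B x -> g' (f x) = x) ->
       forall y, g' y = g y).
Proof.
have [[R0 _ R_sub _] [_ pi0 _] _] := hR.
have [[_ _ [e_lin _ e1] _ _] [B_const _ _] B_spans _] := hG.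
have [_ _ _ [_ e'_R _]] := hG'.
have [[f_lin _ _] _ _ f_e] := hf.
have [g fK gK] := hiso.
exists g; split.
  split=> [|x _]; last exact: fK.
  apply: (group_comor_can hf fK gK) => y B'y.
  apply: (mem_auto_blowup R0 R_sub pi0 e_lin e1 B_const B_spans).
  by rewrite -f_e gK; apply: e'_R.
move=> g' [[[g'_lin _ _] _ _ _] g'fK] y.
have g'fK_all : (g' \o f) =1 id.
  apply: (linear_fun_eq_on_lattice _ _ pi0 B_spans) => // a x z.
  by rewrite /= f_lin g'_lin.
by rewrite -[y]gK [g' _]g'fK_all fK.
Qed.
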